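(* If $\Gamma$ is a finite vertex-transitive graph with $\operatorname{Aut}(\Gamma)\cong A_5$, then the action of $\operatorname{Aut}(\Gamma)$ on $V(\Gamma)$ is imprimitive.
   Context: For $G$ transitive on $X$, a block is $B\subset X$ with $gB=B$ or $gB\cap B=\emptyset$ for all $g\in G$; it is nontrivial if $1<|B|<|X|$; the action is imprimitive if a nontrivial block exists and primitive otherwise. $A_5$ is the alternating group on $5$ letters. *)

From mathcomp Require Import all_boot all_fingroup all_solvable.
Set Implicit Arguments. Unset Strict Implicit. Unset Printing Implicit Defensive.
Local Open Scope group_scope.

(* A finite simple graph: vertex type V (finite), edge relation e,
   assumed symmetric and irreflexive in the theorem. *)

Definition graph_aut_set (V : finType) (e : rel V) : {set {perm V}} :=
  [set s : {perm V} | [forall x, forall y, e (s x) (s y) == e x y]].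

Lemma graph_aut_group_set (V : finType) (e : rel V) :
  group_set (graph_aut_set e).
Proof.
apply/andP; split.
  by rewrite inE; apply/forallP => x; apply/forallP => y; rewrite !perm1.
apply/subsetP => _ /mulsgP[s t Hs Ht ->].
rewrite !inE in Hs Ht *; apply/forallP => x; apply/forallP => y.
rewrite !permM.
by rewrite (eqP (forallP (forallP Ht (s x)) (s y))) (eqP (forallP (forallP Hs x) y)).
Qed.

Canonical graph_aut (V : finType) (e : rel V) : {group {perm V}} :=
  Group (graph_aut_group_set e).

Definition is_block (V : finType) (G : {set {perm V}}) (B : {set V}) : Prop :=
  forall g, g \in G -> (g @: B = B) \/ [disjoint g @: B & B].

Definition nontrivial_block (V : finType) (B : {set V}) : Prop :=
  1 < #|B| < #|V|.

Definition imprimitive (V : finType) (G : {set {perm V}}) : Prop :=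
  exists B : {set V}, nontrivial_block B /\ is_block G B.

(* Assume Aut(e) = G is primitive, i.e. a point stabilizer H is maximal in G.
   Automorphism groups of relations are 2-closed: a permutation agreeing on every
   pair of points with some element of G lies in G.  Transport H into A5 acting on
   5 letters.  If H leaves invariant a set w of one or two letters, maximality makes
   H the full stabilizer of w, so V is A5-equivariantly the A5-orbit of w; a
   transposition agrees on any two sets with an even permutation, hence induces an
   element of G, which is absurd as it is odd.  Otherwise 5 divides #|H|, so
   #|V| is 6 or 12.  For 12, H would be a maximal, hence self-normalizing, Sylow
   5-subgroup with 12 conjugates, against Sylow's theorem; for 6, an element of
   order 5 in H makes G 2-transitive, and 2-closure forces G = Sym(V) of order 720. *)

From mathcomp Require Import all_boot all_fingroup all_solvable zify.
Set Implicit Arguments. Unset Strict Implicit. Unset Printing Implicit Defensive.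
Local Open Scope group_scope.

Section PermImages.

Variable T : finType.

Lemma imset_permM (s t : {perm T}) (A : {set T}) : (s * t) @: A = t @: (s @: A).
Proof. by rewrite -imset_comp; apply: eq_imset => x; rewrite permM. Qed.

Lemma tperm_imset_id (c d : T) (A : {set T}) :
  (c \in A) = (d \in A) -> tperm c d @: A = A.
Proof.
move=> cdA; apply/eqP; rewrite eqEcard card_imset ?leqnn ?andbT; last exact: perm_inj.
apply/subsetP=> _ /imsetP[x Ax ->].
by case: tpermP => [xc|xd|//]; [rewrite -cdA -xc | rewrite cdA -xd].
Qed.

Lemma astabs_perm (q : {perm T}) (A : {set T}) :
  (q \in 'N(A | 'P)) = (q @: A == A).
Proof. by rewrite -astab1_set; apply/astab1P/eqP. Qed.

End PermImages.

Section Blocks.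

Variables (V : finType) (G : {group {perm V}}).
Hypothesis trG : [transitive G, on [set: V] | 'P].

Lemma imprimitivity_system_imprimitive (Q : {set {set V}}) :
  imprimitivity_system G [set: V] 'P Q -> imprimitive G.
Proof.
case/and3P=> /and3P[/eqP covQ tiQ nQ0] actQ /andP[Q_gt1 Q_ltV].
have [x _ _] := imsetP trG.
pose B := pblock Q x.
have QB : B \in Q by rewrite pblock_mem // covQ.
have QgB g : g \in G -> g @: B \in Q by move=> Gg; rewrite -(actsP actQ g Gg B) in QB.
have QE Y : Y \in Q -> exists2 g, g \in G & Y = g @: B.
  move=> QY; have /set0Pn[y Yy] : Y != set0 by apply: contraNneq nQ0 => <-.
  have [g Gg gx] := atransP2 trG (in_setT x) (in_setT y).
  have gBy : y \in g @: B by rewrite gx /= apermE imset_f // mem_pblock covQ.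
  by exists g; rewrite // -(def_pblock tiQ QY Yy) (def_pblock tiQ (QgB g Gg) gBy).
have cardV : #|V| = (#|Q| * #|B|)%N.
  have partQ : partition Q [set: V] by apply/and3P; rewrite covQ.
  rewrite -cardsT (card_partition partQ) -sum_nat_const.
  by apply: eq_bigr => Y /QE[g _ ->]; rewrite card_imset //; apply: perm_inj.
exists B; split=> [|g Gg].
  have B_gt1 : 1 < #|B|.
    by rewrite -(ltn_pmul2l (ltnW Q_gt1)) muln1 -cardV -cardsT.
  by rewrite /nontrivial_block cardV B_gt1 ltn_Pmull // ltnW.
have [gB|gB] := eqVneq (g @: B) B; [left | right] => //.
exact: (trivIsetP tiQ _ _ (QgB g Gg) QB gB).
Qed.

Lemma not_primitive_imprimitive :
  ~~ [primitive G, on [set: V] | 'P] -> imprimitive G.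
Proof.
by rewrite /primitive trG negbK => /existsP[Q]; apply: imprimitivity_system_imprimitive.
Qed.

End Blocks.

Section PairClosure.

Variable V : finType.

Definition pair_closed (G : {set {perm V}}) : Prop :=
  forall s : {perm V},
    (forall x y, exists2 g, g \in G & s x = g x /\ s y = g y) -> s \in G.

Lemma graph_aut_pair_closed (e : rel V) : pair_closed (graph_aut e).
Proof.
move=> s sG; rewrite inE; apply/forallP=> x; apply/forallP=> y.
have [g] := sG x y; rewrite inE => /forallP/(_ x)/forallP/(_ y) eg [-> ->] //.
Qed.

Variables (G : {group {perm V}}) (v : V).
Hypothesis trG : [transitive G, on [set: V] | 'P].
Hypothesis trGv : [transitive 'C_G[v | 'P], on [set~ v] | 'P].
Hypothesis pcG : pair_closed G.

Lemma pair_closed_2transitive_setT : G :=: [set: {perm V}].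
Proof.
apply/eqP; rewrite eqEsubset subsetT; apply/subsetP=> s _.
have moveG x y : exists2 g, g \in G & g x = y.
  by have [g Gg ->] := atransP2 trG (in_setT x) (in_setT y); exists g.
apply: pcG => x y; have [-> | nxy] := eqVneq x y.
  by have [g Gg gx] := moveG y (s y); exists g.
have [a Ga ax] := moveG x v; have [b Gb bsx] := moveG (s x) v.
have ayv : a y \in [set~ v] by rewrite !inE -ax (inj_eq perm_inj) eq_sym.
have bsyv : b (s y) \in [set~ v] by rewrite !inE -bsx !(inj_eq perm_inj) eq_sym.
have [h /setIP[Gh /astab1P/=] hv hay] := atransP2 trGv ayv bsyv.
rewrite /= !apermE in hv hay.
exists (a * h * b^-1); first by rewrite !groupM ?groupV.
by rewrite !permM ax hv -hay -bsx !permK.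
Qed.

End PairClosure.

Lemma prime_order_stabilizer_transitive (V : finType) (H : {group {perm V}}) v x :
    H \subset 'C[v | 'P] -> x \in H -> prime #[x] -> #[x] = #|V|.-1 ->
  [transitive H, on [set~ v] | 'P].
Proof.
move=> Hv Hx x_pr ox.
have fixH h : h \in H -> h v = v by move/(subsetP Hv)/astab1P.
have actH : [acts H, on [set~ v] | 'P].
  by apply/actsP=> h Hh y; rewrite !inE /= apermE -{1}(fixH h Hh) (inj_eq perm_inj).
have [u xu] : exists u, x u != u.
  apply/existsP; apply: contraTT (prime_gt1 x_pr); rewrite negb_exists => /forallP x1.
  suff -> : x = 1 by rewrite order1.
  by apply/permP=> y; rewrite perm1; apply/eqP/negPn/x1.
have uv : u \in [set~ v] by rewrite !inE; apply: contraNneq xu => ->; rewrite fixH.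
pose O := orbit 'P <[x]> u.
have cardO : #|O| = #[x].
  apply/(prime_nt_dvdP x_pr); last by rewrite orderE dvdn_orbit.
  apply: contraNneq xu => /card_orbit1 Ou.
  by have := mem_orbit 'P u (cycle_id x); rewrite Ou inE /= apermE.
apply/imsetP; exists u => //; apply/eqP; rewrite eq_sym eqEcard acts_sub_orbit // uv.
by rewrite cardsC1 -ox -cardO subset_leq_card // !orbitE imsetS // cycle_subG.
Qed.

Lemma small_invariant_set_or_transitive (T : finType) (K : {group {perm T}}) (x : T) :
  (exists2 w : {set T}, 0 < #|w| <= #|T|./2 & K \subset 'N(w | 'P)) \/ #|T| %| #|K|.
Proof.
pose O := orbit 'P K x.
have KO : K \subset 'N(O | 'P) := acts_orbit _ _ (subsetT K).
have O_gt0 : 0 < #|O| by apply/card_gt0P; exists x; apply: orbit_refl.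
have cardOC := cardsC O.
have [O_small | O_large] := leqP #|O| #|T|./2.
  by left; exists O; rewrite ?O_gt0.
have [O_ltT | O_geT] := ltnP #|O| #|T|.
  by left; exists (~: O); [lia | rewrite astabsC].
by right; rewrite -(_ : #|O| = #|T|) ?dvdn_orbit //; have := max_card O; lia.
Qed.

Section AltActions.

Variable T : finType.

Lemma Alt_agree_on_two_sets (s : {perm T}) (X Y : {set T}) : 4 < #|T| ->
  exists2 p, p \in 'Alt_T & p @: X = s @: X /\ p @: Y = s @: Y.
Proof.
move=> T_gt4; have [sA | sA] := boolP (s \in 'Alt_T); first by exists s.
have /injectivePn[c [d ncd [cdX cdY]]] : ~~ injectiveb (fun x => (x \in X, x \in Y)).
  by apply/injectiveP=> /leq_card; rewrite card_prod !card_bool leqNgt T_gt4.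
exists (tperm c d * s); last by rewrite !imset_permM !tperm_imset_id.
by move: sA; rewrite !Alt_even odd_permM odd_tperm ncd negbK => ->.
Qed.

Lemma Alt_2transitive : 3 < #|T| -> [transitive^2 'Alt_T, on [set: T] | 'P].
Proof. by move=> T_gt3; apply: ntransitive_weak (Alt_trans T); rewrite -subn2 ltn_subRL. Qed.

Lemma Alt_transitive : 2 < #|T| -> [transitive 'Alt_T, on [set: T] | 'P].
Proof. by move=> T_gt2; apply: ntransitive1 (Alt_trans T); rewrite -subn2 subn_gt0. Qed.

Lemma Alt_move_pair (a b x y : T) : 3 < #|T| -> a != b -> x != y ->
  exists2 q, q \in 'Alt_T & q a = x /\ q b = y.
Proof.
move=> T_gt3 nab nxy.
have dtuple2 (c d : T) : c != d -> [tuple c; d] \in 2.-dtuple([set: T]).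
  by move=> ncd; rewrite inE /= inE ncd; apply/subsetP=> ? _; rewrite inE.
have [q qA /(congr1 val) [-> ->]] :=
  atransP2 (Alt_2transitive T_gt3) (dtuple2 a b nab) (dtuple2 x y nxy).
by exists q.
Qed.

Lemma Alt_not_setwise_invariant (w : {set T}) : 2 < #|T| -> 0 < #|w| < #|T| ->
  ~~ ('Alt_T \subset 'N(w | 'P)).
Proof.
move=> T_gt2 /andP[/card_gt0P[a wa] w_ltT]; apply/negP => Aw.
have /card_gt0P[c] : 0 < #|~: w| by have := cardsC w; lia.
rewrite inE => wc.
have [q qA qac] := atransP2 (Alt_transitive T_gt2) (in_setT a) (in_setT c).
by move: wc; rewrite qac /= (astabs_act a (subsetP Aw q qA)) wa.
Qed.

Lemma perm_eq_on_Alt_orbit (r s : {perm T}) (w : {set T}) :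
    3 < #|T| -> 0 < #|w| <= 2 ->
    (forall q, q \in 'Alt_T -> r @: (q @: w) = s @: (q @: w)) ->
  r = s.
Proof.
move=> T_gt3 /andP[w_gt0 w_le2] rsw; apply/permP => x.
have [/eqP/cards1P[a wa] | w_ne1] := eqVneq #|w| 1%N.
  have [q qA ->] := atransP2 (Alt_transitive (ltnW T_gt3)) (in_setT a) (in_setT x).
  by have := rsw q qA; rewrite wa !imset_set1 => /set1_inj.
have /cards2P[a [b [nab wab]]] : #|w| == 2 by lia.
have /card_gt0P[y] : 0 < #|[set~ x]| by rewrite cardsC1; lia.
have /card_gt0P[z] : 0 < #|~: [set x; y]|.
  by have := cardsC [set x; y]; rewrite cards2; case: (x != y); lia.
rewrite !inE negb_or ![_ == x]eq_sym => /andP[nxz nzy] nxy.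
have r_in (t : T) : x != t -> r x \in [set s x; s t].
  move=> nxt; have [q qA [qax qbt]] := Alt_move_pair T_gt3 nab nxt.
  by have := rsw q qA; rewrite wab !imsetU1 !imset_set1 qax qbt => <-; rewrite !inE eqxx.
move: (r_in y nxy) (r_in z nxz); rewrite !inE => /orP[/eqP //|/eqP ry] /orP[/eqP //|/eqP rz].
by move: nzy; rewrite -(inj_eq (@perm_inj _ s)) -ry -rz eqxx.
Qed.

End AltActions.

Lemma maximal_Sylow_index (gT : finGroupType) (G P : {group gT}) p :
  prime p -> simple G -> p.-Sylow(G) P -> maximal P G -> P :!=: 1 ->
  #|G : P| %% p = 1%N.
Proof.
move=> p_pr simG sylP maxP ntP.
have ltPG : P \proper G := maxgroupp maxP; have sPG := proper_sub ltPG.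
have /maximal_eqP[_ maxPG] : maximal_eq P G by rewrite /maximal_eq maxP orbT.
have sPN : P \subset 'N_G(P) by rewrite subsetI sPG normG.
have [NP | NG] := maxPG _ sPN (subsetIl _ _).
  by rewrite -NP -(card_Syl sylP) card_Syl_mod.
have nPG : P <| G by rewrite /normal sPG -NG subsetIr.
have [/eqP P1 | PG] := (simpleP _ simG).2 _ nPG; first by rewrite P1 in ntP.
by rewrite PG properE subxx in ltPG.
Qed.

Lemma dvdn12_fact_ge60 n : n %| 12 -> 60 <= n`! -> n = 6 \/ n = 12.
Proof.
rewrite dvdn_divisors //.
by do 6?case/predU1P=> [->|]; rewrite ?inE //; [left | right].
Qed.

Section PointSets.

Variables (V T : finType) (G : {group {perm V}}) (v : V).
Hypothesis trG : [transitive G, on [set: V] | 'P].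
Variables (f : {morphism G >-> {perm T}}) (w : {set T}).
Hypothesis injf : 'injm f.
Hypothesis fCv : f @* 'C_G[v | 'P] = 'N_(f @* G)(w | 'P).

Lemma morphim_fix_setwise g : g \in G -> (f g @: w == w) = (g v == v).
Proof.
move=> Gg; have fGg : f g \in f @* G by apply: mem_morphim.
have -> : (g v == v) = (g \in 'C_G[v | 'P]) by rewrite inE Gg; apply/eqP/astab1P.
rewrite -astabs_perm -[_ \in 'N(_ | _)]andTb -fGg -in_setI -fCv.
by apply/morphimP/idP => [[h Gh Ch /(injmP injf _ _ Gg Gh) ->] | Cg] //; exists g.
Qed.

Definition transporter u := odflt 1 [pick g in G | g v == u].

Lemma transporterP u : transporter u \in G /\ transporter u v = u.
Proof.
rewrite /transporter; case: pickP => [g /andP[Gg /eqP] // | none].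
have [g Gg gv] := atransP2 trG (in_setT v) (in_setT u).
by have := none g; rewrite Gg gv /= apermE eqxx.
Qed.

(* Independent of the choice of transporter, as f maps the stabilizer of v onto that of w. *)
Definition point_set u := f (transporter u) @: w.

Lemma point_setJ g u : g \in G -> point_set (g u) = f g @: point_set u.
Proof.
move=> Gg; have [Ga av] := transporterP (g u); have [Gb bv] := transporterP u.
set a := transporter (g u) in Ga av *; set b := transporter u in Gb bv *.
have Gc : b * g * a^-1 \in G by rewrite !groupM ?groupV.
have /eqP : f (b * g * a^-1) @: w == w.
  by rewrite morphim_fix_setwise // !permM bv -av permK.
rewrite !morphM ?morphV ?groupM ?groupV // => fw.
by rewrite /point_set -imset_permM -[in LHS]fw -!imset_permM mulgKV.
Qed.

Lemma point_set_v : point_set v = w.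
Proof. by have [Gt tv] := transporterP v; apply/eqP; rewrite morphim_fix_setwise // tv. Qed.

Lemma point_set_inj : injective point_set.
Proof.
move=> u1 u2 eq12; have [Ga av] := transporterP u1; have [Gb bv] := transporterP u2.
set a := transporter u1 in Ga av *; set b := transporter u2 in Gb bv *.
have : f (a * b^-1) @: w == w.
  apply/eqP; rewrite morphM ?morphV ?groupV // imset_permM.
  by rewrite -/(point_set u1) eq12 /point_set -imset_permM mulgV imset_perm1.
rewrite morphim_fix_setwise ?groupM ?groupV // permM av => /eqP.
by rewrite -bv => /(canRL (permKV b)).
Qed.

Lemma lift_setwise_perm (s : {perm T}) : pair_closed G ->
    (forall X Y : {set T}, exists2 g, g \in G & f g @: X = s @: X /\ f g @: Y = s @: Y) ->
  exists2 r, r \in G & forall u, point_set (r u) = s @: point_set u.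
Proof.
move=> pcG sG.
have agree x y : exists2 g, g \in G &
    point_set (g x) = s @: point_set x /\ point_set (g y) = s @: point_set y.
  by have [g Gg [gx gy]] := sG (point_set x) (point_set y); exists g; rewrite ?point_setJ.
pose sf u := odflt v [pick u' | point_set u' == s @: point_set u].
have sfP u : point_set (sf u) = s @: point_set u.
  rewrite /sf; case: pickP => [u' /eqP // | none].
  by have [g _ [gu _]] := agree u u; have := none (g u); rewrite gu eqxx.
have sf_inj : injective sf.
  by move=> u1 u2 /(congr1 point_set); rewrite !sfP => /(imset_inj perm_inj)/point_set_inj.
exists (perm sf_inj) => [|u]; last by rewrite permE sfP.
apply: pcG => x y; have [g Gg [gx gy]] := agree x y.
by exists g; rewrite // !permE; split; apply: point_set_inj; rewrite sfP.
Qed.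

End PointSets.

Section PairClosedA5.

Variables (V : finType) (G : {group {perm V}}) (v : V).
Hypotheses (trG : [transitive G, on [set: V] | 'P]) (pcG : pair_closed G).
Variable f : {morphism G >-> {perm 'I_5}}.
Hypotheses (injf : 'injm f) (fG : f @* G = 'Alt_('I_5)).
Hypothesis primG : [primitive G, on [set: V] | 'P].

Local Notation H := 'C_G[v | 'P].

Lemma cardG_eq60 : #|G| = 60.
Proof.
by apply/double_inj; rewrite -mul2n -(card_injm injf) // fG card_Alt card_ord.
Qed.

Lemma maximal_eq_stabilizer : maximal_eq H G.
Proof. by rewrite -(trans_prim_astab (in_setT v) trG). Qed.

(* Otherwise the transposition tau lifts through point_set to an element of G with odd image. *)
Lemma stabilizer_image_not_small_invariant (w : {set 'I_5}) :
  0 < #|w| <= 2 -> ~~ (f @* H \subset 'N(w | 'P)).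
Proof.
move=> w_small; apply/negP => Hw.
have /maximal_eqP[_ maxH] : maximal_eq (f @* H) 'Alt_('I_5).
  by rewrite -fG injm_maximal_eq ?subsetIl ?maximal_eq_stabilizer.
have sHA : f @* H \subset 'Alt_('I_5) by rewrite -fG morphimS ?subsetIl.
have sHN : f @* H \subset 'N_('Alt_('I_5))(w | 'P) by rewrite subsetI sHA.
have [NH | NA] := maxH _ sHN (subsetIl _ _); last first.
  have : ~~ ('Alt_('I_5) \subset 'N(w | 'P)).
    by apply: Alt_not_setwise_invariant; rewrite card_ord //; lia.
  by rewrite -{1}NA subsetIr.
have fCv : f @* H = 'N_(f @* G)(w | 'P) by rewrite fG NH.
pose tau : {perm 'I_5} := tperm ord0 ord_max.
have tau_odd : tau \notin 'Alt_('I_5) by rewrite Alt_even negbK odd_tperm.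
have tau_local (X Y : {set 'I_5}) :
    exists2 g, g \in G & f g @: X = tau @: X /\ f g @: Y = tau @: Y.
  have [p] := Alt_agree_on_two_sets tau X Y (eq_leq (esym (card_ord 5))).
  by rewrite -fG => /morphimP[g Gg _ ->]; exists g.
have [r Gr rE] := lift_setwise_perm trG injf fCv pcG tau_local.
suff fr : f r = tau by rewrite -fr -fG mem_morphim in tau_odd.
apply: (perm_eq_on_Alt_orbit (w := w)); rewrite ?card_ord // -fG => _ /morphimP[g Gg _ ->].
by rewrite -(point_set_v trG injf fCv) -!(point_setJ trG injf fCv) ?groupM // rE.
Qed.

Lemma cardV_mul_stabilizer : (#|V| * #|H|)%N = 60.
Proof.
rewrite -cardsT -(atransP trG v) ?inE // card_orbit mulnC Lagrange ?subsetIl //.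
exact: cardG_eq60.
Qed.

(* A Sylow 5-subgroup of the simple group G cannot be maximal: 12 != 1 %[mod 5]. *)
Lemma card_stabilizer_neq5 : #|H| != 5.
Proof.
apply/eqP=> H5; have iH : #|G : H| = 12.
  by rewrite -card_orbit (atransP trG v) ?inE // cardsT; have := cardV_mul_stabilizer; lia.
have sylH : 5.-Sylow(G) H by rewrite /pHall subsetIl /pgroup H5 iH.
have simG : simple G.
  have isoG : G \isog 'Alt_('I_5) by apply/isogP; exists f.
  by rewrite (isog_simple isoG) simple_Alt5 ?card_ord.
have maxH : maximal H G.
  have := maximal_eq_stabilizer; rewrite /maximal_eq => /predU1P[HG | //].
  by move: H5; rewrite HG cardG_eq60.
have ntH : H :!=: 1 by rewrite trivg_card1 H5.
by have := maximal_Sylow_index (isT : prime 5) simG sylH maxH ntH; rewrite iH.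
Qed.

(* An element of order 5 in H makes G 2-transitive on the 6 points of V. *)
Lemma card_stabilizer_neq10 : #|H| != 10.
Proof.
apply/eqP=> H10; have V6 : #|V| = 6 by have := cardV_mul_stabilizer; rewrite H10; lia.
have [x Hx ox] : {x | x \in H & #[x] = 5} by apply: Cauchy; rewrite ?H10.
have trH : [transitive H, on [set~ v] | 'P].
  by apply: prime_order_stabilizer_transitive Hx _ _; rewrite ?subsetIr ?ox ?V6.
have GT := pair_closed_2transitive_setT trG trH pcG.
by have := card_Sym V; rewrite -[Sym V]/[set: {perm V}] -GT cardG_eq60 V6.
Qed.

Lemma card_stabilizer_not_dvd5 : ~~ (5 %| #|H|).
Proof.
apply/negP=> /dvdnP[k Hk]; have VH := cardV_mul_stabilizer.
have V_dvd12 : #|V| %| 12 by apply/dvdnP; exists k; lia.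
have V_fact : 60 <= #|V|`!.
  by rewrite -cardG_eq60 -(card_Sym V) subset_leq_card ?subsetT.
have [V6 | V12] := dvdn12_fact_ge60 V_dvd12 V_fact; rewrite ?V6 ?V12 in VH.
  by move/eqP: card_stabilizer_neq10; lia.
by move/eqP: card_stabilizer_neq5; lia.
Qed.

End PairClosedA5.

Theorem mainTheorem11 (V : finType) (e : rel V)
  (e_sym : symmetric e) (e_irr : irreflexive e)
  (vtrans : [transitive graph_aut e, on [set: V] | 'P])
  (isoA5 : graph_aut e \isog 'Alt_('I_5)) :
  imprimitive (graph_aut e).
Proof.
apply: not_primitive_imprimitive => //; apply/negP => primG.
have [v _ _] := imsetP vtrans.
have [f injf fG] := isogP isoA5.
have pcG : pair_closed (graph_aut e) by apply: graph_aut_pair_closed.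
have not_small := stabilizer_image_not_small_invariant v vtrans pcG injf fG primG.
have not_dvd5 := card_stabilizer_not_dvd5 v vtrans pcG injf fG primG.
have [[w w_small Hw] | H5] :=
  small_invariant_set_or_transitive (f @* 'C_(graph_aut e)[v | 'P]) ord0.
  by rewrite card_ord in w_small; rewrite (negPf (not_small w w_small)) in Hw.
by rewrite card_ord (card_injm injf) ?subsetIl // (negPf not_dvd5) in H5.
Qed.
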